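(* Let $n\ge1$. If $n\notin\{2^m-1,2^m,2^m+1\}$ for every $m\ge1$, then the maximally balanced tree $T^{mb}_n$ is not isomorphic to the GFB tree with $n$ leaves; in particular there are at least two non-isomorphic trees $T\in\mathcal{T}_n$ with $\mathcal{C}(T)=c_n$. If $n\in\{2^m-1,2^m,2^m+1\}$ for some $m\ge1$, then there is exactly one tree $T\in\mathcal{T}_n$ with $\mathcal{C}(T)=c_n$.
   Context: Bifurcating trees: rooted trees in which every internal node has exactly two children, considered up to isomorphism; $\mathcal{T}_n$ is the set of such trees with $n$ leaves. For a node $w$, $\kappa_T(w)$ is its number of descendant leaves. The Colless index is $\mathcal{C}(T)=\sum_{v}|\kappa_T(v_1)-\kappa_T(v_2)|$, summed over internal nodes $v$ with children $v_1,v_2$; $c_n=\min\{\mathcal{C}(T):T\in\mathcal{T}_n\}$. $T^{mb}_n$ is the unique tree in $\mathcal{T}_n$ in which at every internal node the numbers of descendant leaves of the two children differ by at most 1. GFB trees: start with a multiset of $n$ single-node trees; while the multiset has more than one tree, remove a tree $u$ with the minimum number of leaves, then remove a tree $v$ with the minimum number of leaves among the remaining trees, and insert the tree consisting of a new root whose two children are the roots of $u$ and $v$; the final tree is the GFB tree with $n$ leaves (it is unique up to isomorphism). *)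

From mathcomp Require Import all_boot.
From Stdlib Require Import Permutation.
Set Implicit Arguments. Unset Strict Implicit. Unset Printing Implicit Defensive.

(* Rooted bifurcating trees (ordered representation); trees "up to
   isomorphism" are handled via the relation [tree_iso] below. *)
Inductive tree : Type :=
| Leaf : tree
| Node : tree -> tree -> tree.

Fixpoint leaves (t : tree) : nat :=
  match t with Leaf => 1 | Node a b => leaves a + leaves b end.

Definition absdiff (a b : nat) : nat := (a - b) + (b - a).

Fixpoint colless (t : tree) : nat :=
  match t with
  | Leaf => 0
  | Node a b => absdiff (leaves a) (leaves b) + colless a + colless b
  end.

Inductive tree_iso : tree -> tree -> Prop :=
| iso_leaf : tree_iso Leaf Leaf
| iso_node a b a' b' : tree_iso a a' -> tree_iso b b' ->
    tree_iso (Node a b) (Node a' b')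
| iso_swap a b a' b' : tree_iso a b' -> tree_iso b a' ->
    tree_iso (Node a b) (Node a' b').

Definition colless_minimal (n : nat) (t : tree) : Prop :=
  leaves t = n /\ forall t', leaves t' = n -> colless t <= colless t'.

Fixpoint max_balanced (t : tree) : Prop :=
  match t with
  | Leaf => True
  | Node a b => absdiff (leaves a) (leaves b) <= 1 /\
                max_balanced a /\ max_balanced b
  end.

(* A run of the GFB algorithm from the multiset s (a list taken up to
   permutation) ending with the single tree t. *)
Inductive gfb_run : seq tree -> tree -> Prop :=
| gfb_done t : gfb_run [:: t] t
| gfb_step s u v r t :
    Permutation s (u :: v :: r) ->
    (forall w, List.In w (v :: r) -> leaves u <= leaves w) ->
    (forall w, List.In w r -> leaves v <= leaves w) ->
    gfb_run (Node u v :: r) t ->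
    gfb_run s t.

Definition gfb_tree (n : nat) (t : tree) : Prop := gfb_run (nseq n Leaf) t.

From mathcomp Require Import all_boot zify.
From Stdlib Require Import Permutation.
Set Implicit Arguments. Unset Strict Implicit. Unset Printing Implicit Defensive.

(* Let [mb n] be the maximally balanced tree with n leaves (split n as
   ceil(n/2) + floor(n/2) at every node) and [cmb n] its Colless index.
   1. [cmb (a + b) <= cmb a + cmb b + |a - b|] (strong induction, halving a and
      b and regrouping the halves); hence every tree with n leaves has Colless
      index at least [cmb n], i.e. c_n = cmb n and [mb n] is minimal.
   2. For n in {2^m - 1, 2^m, 2^m + 1} ("near a power of two") equality in 1.
      forces |a - b| <= 1, and the two parts are again near powers of two; by
      induction every minimal tree with n leaves is isomorphic to [mb n].
   3. Every GFB tree has a root child whose leaf count is a power of two: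
      throughout the algorithm, for some k all leaf counts lie in
      [2^k, 2^(k+1)], at most one of them is not a power of two, and every tree
      has this property.  A maximally balanced tree of this shape has its leaf
      count near a power of two.
   4. If n is not near a power of two, [mb (n - 2^j)] grafted next to
      [mb (2^j)], for a suitable j, is a second, unbalanced, minimal tree. *)

Lemma absdiffC x y : absdiff x y = absdiff y x.
Proof. by rewrite /absdiff addnC. Qed.

Lemma leaves_pos t : 1 <= leaves t.
Proof. by elim: t => //= a ha b hb; rewrite ltn_addr. Qed.

Lemma iso_leaves t u : tree_iso t u -> leaves t = leaves u.
Proof. by elim=> //= *; lia. Qed.

Lemma iso_max_balanced t u : tree_iso t u -> max_balanced t -> max_balanced u.
Proof.
elim=> //= a b a' b' iso_a IHa iso_b IHb [d [bal_a bal_b]].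
  by rewrite -(iso_leaves iso_a) -(iso_leaves iso_b); auto.
by rewrite -(iso_leaves iso_a) -(iso_leaves iso_b) absdiffC; auto.
Qed.

(* The maximally balanced tree, computed with fuel [f >= n] so that the
   recursion is structural. *)
Fixpoint mb_fuel (f n : nat) : tree :=
  match f with
  | 0 => Leaf
  | f'.+1 => if n <= 1 then Leaf
             else Node (mb_fuel f' (n - n %/ 2)) (mb_fuel f' (n %/ 2))
  end.

Lemma mb_fuel_stable f1 f2 n : n <= f1 -> n <= f2 -> mb_fuel f1 n = mb_fuel f2 n.
Proof.
elim: f1 f2 n => [|f1 IH] [|f2] n h1 h2 //=; try by rewrite ifT //; lia.
case: ifP => // /negbT; rewrite -ltnNge => n_gt1.
by rewrite (IH f2 (n - n %/ 2)) ?(IH f2 (n %/ 2)) //; lia.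
Qed.

Definition mb (n : nat) : tree := mb_fuel n n.

Lemma mb_unfold n : 2 <= n -> mb n = Node (mb (n - n %/ 2)) (mb (n %/ 2)).
Proof.
case: n => [|n] // n_gt1; rewrite /mb /= ifF; last lia.
by congr Node; apply: mb_fuel_stable; lia.
Qed.

Lemma mb_node x y : y <= x <= y + 1 -> 1 <= y -> mb (x + y) = Node (mb x) (mb y).
Proof.
move=> hxy y_pos; rewrite mb_unfold; last lia.
have -> : (x + y) %/ 2 = y by lia.
by have -> : x + y - y = x by lia.
Qed.

Lemma leaves_mb n : 1 <= n -> leaves (mb n) = n.
Proof.
elim/ltn_ind: n => n IH n_pos; have [n_le1|n_gt1] := leqP n 1.
  by have -> : n = 1 by lia.
by rewrite mb_unfold //= !IH; lia.
Qed.

Lemma max_balanced_mb n : max_balanced (mb n).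
Proof.
elim/ltn_ind: n => n IH; have [n_le1|n_gt1] := leqP n 1.
  by case: n IH n_le1 => [|[]].
rewrite mb_unfold //= !leaves_mb /absdiff; try lia.
by split; [lia | split; apply: IH; lia].
Qed.

(* [cmb n]: the Colless index of [mb n]; it turns out to be c_n. *)
Definition cmb (n : nat) : nat := colless (mb n).

Lemma cmb1 : cmb 1 = 0. Proof. by []. Qed.

Lemma cmb_split x y : 1 <= x -> 1 <= y -> absdiff x y <= 1 ->
  cmb (x + y) = absdiff x y + cmb x + cmb y.
Proof.
wlog le_yx : x y / y <= x => [W|x_pos y_pos].
  have [le_yx|/ltnW le_xy] := leqP y x; first exact: W.
  move=> x_pos y_pos hxy; rewrite (addnC x) W //; last by rewrite absdiffC.
  by rewrite absdiffC; lia.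
rewrite /absdiff => hxy; rewrite /cmb mb_node /= ?leaves_mb /absdiff //; lia.
Qed.

Lemma cmb_halves a : 2 <= a -> exists a1 a2,
  [/\ a1 + a2 = a, a2 <= a1 <= a2 + 1, 1 <= a2 & cmb a = a1 - a2 + cmb a1 + cmb a2].
Proof.
move=> a_ge2; exists (a - a %/ 2), (a %/ 2); split; try lia.
rewrite -{1}[a](subnK (leq_div a 2)) cmb_split; rewrite /absdiff; lia.
Qed.

(* For b < a, regroup the halves of a and b into the nearly
   equal split (a1 + b2) + (a2 + b1) of a + b and use induction. *)
Lemma cmb_node_bound a b : 1 <= a -> 1 <= b ->
  cmb (a + b) <= cmb a + cmb b + absdiff a b.
Proof.
have [n] := ubnP (a + b); elim: n a b => // n IH a b hn a_pos b_pos.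
wlog le_ba : a b hn a_pos b_pos / b <= a => [W|].
  have [le_ba|/ltnW le_ab] := leqP b a; first exact: W.
  rewrite (addnC a) (absdiffC a) (addnC (cmb a)).
  by apply: W; rewrite // addnC.
have [<-|ne_ab] := eqVneq a b; first by rewrite cmb_split; rewrite /absdiff; lia.
have /cmb_halves [a1 [a2 [ea ha a2_pos ca]]] : 2 <= a by lia.
have [->|ne_b1] := eqVneq b 1.
  have ih : cmb (a2 + 1) <= cmb a2 + cmb 1 + absdiff a2 1 by apply: IH; lia.
  rewrite (_ : a + 1 = (a2 + 1) + a1); last lia.
  by rewrite cmb_split; rewrite /absdiff cmb1 in ih *; lia.
have /cmb_halves [b1 [b2 [eb hb b2_pos cb]]] : 2 <= b by lia.
have ih1 : cmb (a1 + b2) <= cmb a1 + cmb b2 + absdiff a1 b2 by apply: IH; lia.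
have ih2 : cmb (a2 + b1) <= cmb a2 + cmb b1 + absdiff a2 b1 by apply: IH; lia.
rewrite (_ : a + b = (a1 + b2) + (a2 + b1)); last lia.
by rewrite cmb_split; rewrite /absdiff in ih1 ih2 *; lia.
Qed.

Lemma colless_ge_cmb t : cmb (leaves t) <= colless t.
Proof.
elim: t => //= a ha b hb.
by apply: leq_trans (cmb_node_bound (leaves_pos a) (leaves_pos b)) _; lia.
Qed.

Lemma colless_minimal_iff n t :
  colless_minimal n t <-> leaves t = n /\ colless t = cmb n.
Proof.
split=> [[lt min_t]|[lt ct]]; subst n.
  split=> //; apply/eqP; rewrite eqn_leq colless_ge_cmb andbT.
  by apply: min_t; rewrite leaves_mb // leaves_pos.
by split=> // t' lt'; rewrite ct -lt' colless_ge_cmb.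
Qed.

Lemma colless_minimal_mb n : 1 <= n -> colless_minimal n (mb n).
Proof. by move=> n_pos; apply/colless_minimal_iff; rewrite leaves_mb. Qed.

Lemma cmb_pow2 m : cmb (2 ^ m) = 0.
Proof.
elim: m => // m IH; have p_pos : 0 < 2 ^ m by rewrite expn_gt0.
by rewrite expnS mul2n -addnn cmb_split ?IH //; rewrite /absdiff; lia.
Qed.

Lemma cmb_pow2_graft j x : 1 <= x -> 2 ^ j <= 2 * x -> x <= 2 * 2 ^ j ->
  cmb (x + 2 ^ j) = cmb x + absdiff x (2 ^ j).
Proof.
elim: j x => [|j IH] x x_pos lo hi.
  by case: x x_pos lo hi => [|[|[|]]].
have [ex1|ne_x1] := eqVneq x 1.
  subst x; case: j {IH hi} lo => [//|j]; rewrite !expnS.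
  have p_pos : 0 < 2 ^ j by rewrite expn_gt0.
  lia.
have /cmb_halves [x1 [x2 [ex hx x2_pos cx]]] : 2 <= x by lia.
have p_even : 2 ^ j = 1 \/ exists q, 2 ^ j = 2 * q.
  by case: j {IH lo hi} => [|j]; [left | right; exists (2 ^ j); rewrite expnS].
have p_pos : 0 < 2 ^ j by rewrite expn_gt0.
rewrite expnS in lo hi *.
have ih1 : cmb (x1 + 2 ^ j) = cmb x1 + absdiff x1 (2 ^ j) by apply: IH; lia.
have ih2 : cmb (x2 + 2 ^ j) = cmb x2 + absdiff x2 (2 ^ j).
  by apply: IH; case: p_even => [|[q]]; lia.
rewrite (_ : x + 2 * 2 ^ j = (x1 + 2 ^ j) + (x2 + 2 ^ j)); last lia.
by rewrite cmb_split ?ih1 ?ih2; rewrite /absdiff in ih1 ih2 *; lia.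
Qed.

Lemma cmb_pow2S m : 1 <= m -> cmb (2 ^ m + 1) = m.
Proof.
elim: m => // m IH _; have [->//|m_pos] := posnP m.
have p_ge2 : 2 <= 2 ^ m by rewrite -{1}(expn1 2) leq_exp2l.
rewrite expnS (_ : 2 * 2 ^ m + 1 = (2 ^ m + 1) + 2 ^ m); last lia.
by rewrite cmb_split ?IH ?cmb_pow2; rewrite /absdiff; lia.
Qed.

Lemma cmb_pow2P m : 1 <= m -> cmb (2 ^ m - 1) = m - 1.
Proof.
elim: m => // m IH _; have [->//|m_pos] := posnP m.
have p_ge2 : 2 <= 2 ^ m by rewrite -{1}(expn1 2) leq_exp2l.
rewrite expnS (_ : 2 * 2 ^ m - 1 = 2 ^ m + (2 ^ m - 1)); last lia.
by rewrite cmb_split ?IH ?cmb_pow2; rewrite /absdiff; lia.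
Qed.

Definition near_pow2 (n : nat) : Prop :=
  exists m, 1 <= m /\ [\/ n = 2 ^ m - 1, n = 2 ^ m | n = 2 ^ m + 1].

Lemma near_pow2_of k z : z = 2 ^ k \/ z = 2 ^ k + 1 \/ 1 <= z /\ z = 2 ^ k - 1 ->
  near_pow2 z.
Proof.
case: k => [|k] hz.
  by exists 1; split=> //; case: hz => [->|[->|[]]]; [exact: Or31 | exact: Or32 | lia].
by exists k.+1; split=> //; case: hz => [?|[?|[_ ?]]]; [exact: Or32 | exact: Or33 | exact: Or31].
Qed.

Lemma near_pow2_split n x y : near_pow2 n -> x + y = n -> 1 <= x -> 1 <= y ->
  absdiff x y <= 1 -> near_pow2 x /\ near_pow2 y.
Proof.
move=> [[|k] [//= _ hn]] exy x_pos y_pos; rewrite /absdiff => dxy.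
have q_pos : 0 < 2 ^ k by rewrite expn_gt0.
rewrite expnS in hn.
by split; apply: (@near_pow2_of k); case: hn; lia.
Qed.

(* A crude growth bound ruling out small exceptional cases. *)
Lemma exp2_ge m : 2 * m <= 2 ^ m.
Proof. by case: m => // m; rewrite expnS leq_pmul2l // ltn_expl. Qed.

Lemma near_pow2_pow2_or_odd n : near_pow2 n ->
  (exists m, n = 2 ^ m) \/ exists q, n = 2 * q + 1.
Proof.
move=> [[|k] [//= _ hn]]; have q_pos : 0 < 2 ^ k by rewrite expn_gt0.
rewrite expnS in hn.
case: hn => hn; [right; exists (2 ^ k - 1) | left; exists k.+1 | right; exists (2 ^ k)].
- by lia.
- by rewrite expnS.
- by lia.
Qed.

Lemma near_pow2_min_split_leaf a : near_pow2 (a + 1) ->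
  cmb (a + 1) = cmb a + absdiff a 1 -> absdiff a 1 <= 1.
Proof.
move=> [m [m_pos hm]]; have := exp2_ge m; rewrite /absdiff.
case: hm => hm; rewrite hm => bound e.
- by rewrite cmb_pow2P // (_ : a = 2 ^ m - 2) in e; lia.
- by rewrite cmb_pow2 in e; lia.
- by rewrite cmb_pow2S // (_ : a = 2 ^ m) ?cmb_pow2 in e; lia.
Qed.

(* Rigidity: when [a + b] is near a power of two, equality in the key
   inequality forces |a - b| <= 1.  Otherwise equality propagates to the
   regrouped pairs (a1, b2) and (a2, b1), which are then nearly equal by
   induction; this contradicts a - b >= 2 when a + b is odd. *)
Lemma near_pow2_min_split a b : near_pow2 (a + b) -> 1 <= a -> 1 <= b ->
  cmb (a + b) = cmb a + cmb b + absdiff a b -> absdiff a b <= 1.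
Proof.
have [n] := ubnP (a + b); elim: n a b => // n IH a b hn near_ab a_pos b_pos.
wlog le_ba : a b hn near_ab a_pos b_pos / b <= a => [W|].
  have [le_ba|/ltnW le_ab] := leqP b a; first exact: W.
  rewrite addnC in hn near_ab; rewrite (absdiffC a) (addnC (cmb a)) (addnC a).
  exact: W.
have [<-|ne_ab] := eqVneq a b; first by rewrite /absdiff; lia.
move=> e; have [b1|b_ge2] := leqP b 1.
  have eb : b = 1 by lia.
  by subst b; apply: near_pow2_min_split_leaf; rewrite // e cmb1 addn0.
have [[m pow]|[q odd_n]] := near_pow2_pow2_or_odd near_ab.
  by rewrite pow cmb_pow2 /absdiff in e *; lia.
have /cmb_halves [a1 [a2 [ea ha a2_pos ca]]] : 2 <= a by lia.
have /cmb_halves [b1 [b2 [eb hb b2_pos cb]]] : 2 <= b by lia.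
have [a1_pos b1_pos] : 1 <= a1 /\ 1 <= b1 by lia.
have [x_pos y_pos] : 1 <= a1 + b2 /\ 1 <= a2 + b1 by lia.
have exy : a + b = (a1 + b2) + (a2 + b1) by lia.
have dxy : absdiff (a1 + b2) (a2 + b1) <= 1 by rewrite /absdiff; lia.
rewrite exy in near_ab e.
have [nx ny] : near_pow2 (a1 + b2) /\ near_pow2 (a2 + b1).
  by apply: near_pow2_split near_ab _ _ _ dxy; lia.
have ix := cmb_node_bound a1_pos b2_pos; have iy := cmb_node_bound a2_pos b1_pos.
rewrite cmb_split // ca cb in e.
have [ex ey] : cmb (a1 + b2) = cmb a1 + cmb b2 + absdiff a1 b2 /\
               cmb (a2 + b1) = cmb a2 + cmb b1 + absdiff a2 b1.
  by rewrite /absdiff in e ix iy dxy *; lia.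
have dx : absdiff a1 b2 <= 1 by apply: IH => //; lia.
have dy : absdiff a2 b1 <= 1 by apply: IH => //; lia.
by rewrite /absdiff in e dx dy dxy *; lia.
Qed.

Lemma near_pow2_min_iso t : near_pow2 (leaves t) -> colless t = cmb (leaves t) ->
  tree_iso (mb (leaves t)) t.
Proof.
elim: t => [|l IHl r IHr] /= near_t ct; first exact: iso_leaf.
have l_pos := leaves_pos l; have r_pos := leaves_pos r.
have cl := colless_ge_cmb l; have cr := colless_ge_cmb r.
have bound := cmb_node_bound l_pos r_pos.
have [el er] : colless l = cmb (leaves l) /\ colless r = cmb (leaves r) by lia.
have d : absdiff (leaves l) (leaves r) <= 1.
  by apply: near_pow2_min_split => //; lia.
have [nl nr] := near_pow2_split near_t erefl l_pos r_pos d.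
rewrite /absdiff in d; have [le_rl|lt_lr] := leqP (leaves r) (leaves l).
  by rewrite mb_node; [apply: iso_node; auto | lia | lia].
by rewrite addnC mb_node; [apply: iso_swap; auto | lia | lia].
Qed.

Definition isp2 (n : nat) : bool := 2 ^ trunc_log 2 n == n.

Lemma isp2P n : reflect (exists k, n = 2 ^ k) (isp2 n).
Proof.
apply: (iffP eqP) => [<-|[k ->]]; first by exists (trunc_log 2 n).
by rewrite trunc_expnK.
Qed.

Lemma isp2_pow2 k : isp2 (2 ^ k).
Proof. by apply/isp2P; exists k. Qed.

Lemma pow2_between k x : isp2 x -> 2 ^ k <= x <= 2 ^ k.+1 ->
  x = 2 ^ k \/ x = 2 ^ k.+1.
Proof.
move=> /isp2P [j ->]; rewrite !leq_exp2l // => bounds.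
have [->|->] : j = k \/ j = k.+1 by lia.
  by left.
by right.
Qed.

Definition off_pow2 (w : tree) : bool := ~~ isp2 (leaves w).

Definition pow2_child (t : tree) : bool :=
  if t is Node a b then isp2 (leaves a) || isp2 (leaves b) else true.

Definition gfb_inv (s : seq tree) : Prop := exists k,
  (forall w, List.In w s -> pow2_child w /\ 2 ^ k <= leaves w <= 2 ^ k.+1) /\
  count off_pow2 s <= 1.

Lemma count_Permutation T (p : pred T) (s1 s2 : seq T) :
  Permutation s1 s2 -> count p s1 = count p s2.
Proof. by elim=> //= [x s1' s2' _ -> | x y s | s1' s2' s3 _ -> _ ->] //; lia. Qed.

Lemma count_In T (p : pred T) w (s : seq T) : List.In w s -> p w <= count p s.
Proof. by elim: s => //= x s IH [<-|/IH]; lia. Qed.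

Lemma count_In0 T (p : pred T) (s : seq T) :
  (forall w, List.In w s -> ~~ p w) -> count p s = 0.
Proof.
elim: s => //= x s IH hs; rewrite (negbTE (hs x (or_introl erefl))) IH //.
by move=> w hw; apply: hs; right.
Qed.

Lemma gfb_rest_doubled k u v r :
  (forall w, List.In w (u :: v :: r) -> 2 ^ k <= leaves w <= 2 ^ k.+1) ->
  count off_pow2 (u :: v :: r) <= 1 ->
  (forall w, List.In w r -> leaves v <= leaves w) -> 2 ^ k < leaves v ->
  forall w, List.In w r -> leaves w = 2 ^ k.+1.
Proof.
move=> range few v_min v_big w w_in.
have /andP [v_lo v_hi] := range v (or_intror (or_introl erefl)).
have /andP [w_lo w_hi] := range w (or_intror (or_intror w_in)).
have le_vw := v_min w w_in; have w_off := count_In off_pow2 w_in.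
have [w_p2|w_off'] := boolP (isp2 (leaves w)).
  by case: (pow2_between w_p2 (introT andP (conj w_lo w_hi))) => // w_k; lia.
have v_p2 : isp2 (leaves v).
  apply: contraLR few; rewrite -ltnNge /= /off_pow2 => ->.
  by move: w_off; rewrite /off_pow2 w_off'; case: (~~ _); lia.
by case: (pow2_between v_p2 (introT andP (conj v_lo v_hi))) => v_k; lia.
Qed.

(* One step of the algorithm preserves the invariant: either the merged tree
   has 2^(k+1) leaves, or afterwards all trees lie in [2^(k+1), 2^(k+2)]. *)
Lemma gfb_inv_step s u v r : Permutation s (u :: v :: r) ->
  (forall w, List.In w (v :: r) -> leaves u <= leaves w) ->
  (forall w, List.In w r -> leaves v <= leaves w) ->
  gfb_inv s -> gfb_inv (Node u v :: r).
Proof.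
move=> perm u_min v_min [k [inv_s few]].
have inv_uvr w : List.In w (u :: v :: r) ->
    pow2_child w /\ 2 ^ k <= leaves w <= 2 ^ k.+1.
  by move=> w_in; apply: inv_s; apply: Permutation_in (Permutation_sym perm) w_in.
rewrite (count_Permutation _ perm) in few.
have le_uv : leaves u <= leaves v := u_min v (or_introl erefl).
have [_ /andP [u_lo u_hi]] := inv_uvr u (or_introl erefl).
have [_ /andP [v_lo v_hi]] := inv_uvr v (or_intror (or_introl erefl)).
have e2k : 2 ^ k.+1 = 2 ^ k + 2 ^ k by rewrite expnS mul2n addnn.
have child_uv : pow2_child (Node u v).
  by move: few; rewrite /= /off_pow2; case: (isp2 _); case: (isp2 _).
have [v_small|v_big] := leqP (leaves v) (2 ^ k).
  have [u_k v_k] : leaves u = 2 ^ k /\ leaves v = 2 ^ k by lia.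
  exists k; split.
    move=> w /= [<-|w_in]; last exact: inv_uvr (or_intror (or_intror w_in)).
    by split=> //=; rewrite u_k v_k; lia.
  by move: few; rewrite /= /off_pow2 /= u_k v_k -e2k !isp2_pow2.
have r_full := gfb_rest_doubled (fun w hw => (inv_uvr w hw).2) few v_min v_big.
exists k.+1; split.
  move=> w /= [<-|w_in]; first by split=> //=; rewrite !expnS; lia.
  by rewrite r_full // (inv_uvr w (or_intror (or_intror w_in))).1 !expnS; lia.
rewrite /= count_In0 /off_pow2 => [|w w_in]; first by case: (~~ _).
by rewrite r_full // isp2_pow2.
Qed.

Lemma gfb_run_pow2_child s t : gfb_run s t -> gfb_inv s -> pow2_child t.
Proof.
elim=> [t' [k [inv _]] | s' u v r t' perm u_min v_min _ IH inv_s].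
  exact: (inv t' (or_introl erefl)).1.
exact/IH/(gfb_inv_step perm u_min v_min inv_s).
Qed.

Lemma gfb_inv_leaves n : gfb_inv (nseq n Leaf).
Proof.
have in_leaves w : List.In w (nseq n Leaf) -> w = Leaf.
  by elim: n => //= n IH [<-|/IH].
exists 0; split=> [w /in_leaves -> //|].
by rewrite count_In0 // => w /in_leaves ->.
Qed.

Lemma gfb_tree_pow2_child n t : gfb_tree n t -> pow2_child t.
Proof. by move=> run; apply: gfb_run_pow2_child run (gfb_inv_leaves n). Qed.

Lemma pow2_child_near_pow2 t : max_balanced t -> pow2_child t -> near_pow2 (leaves t).
Proof.
case: t => [_ _|a b /= [d _] /orP child]; first by exists 1; split=> //; apply: Or31.
rewrite /absdiff in d; case: child => /isp2P [k hk].
  by apply: (@near_pow2_of k.+1); rewrite expnS; lia.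
by apply: (@near_pow2_of k.+1); rewrite expnS; lia.
Qed.

Lemma gfb_not_max_balanced n : ~ near_pow2 n -> forall tmb tg,
  leaves tmb = n -> max_balanced tmb -> gfb_tree n tg -> ~ tree_iso tmb tg.
Proof.
move=> not_near tmb tg ln bal /gfb_tree_pow2_child child iso; apply: not_near.
by rewrite -ln (iso_leaves iso); apply: pow2_child_near_pow2 (iso_max_balanced iso bal) child.
Qed.

Lemma pow2_graft_minimal x j : 1 <= x -> 2 ^ j <= 2 * x -> x <= 2 * 2 ^ j ->
  colless_minimal (x + 2 ^ j) (Node (mb x) (mb (2 ^ j))).
Proof.
move=> x_pos lo hi; apply/colless_minimal_iff.
rewrite /= !leaves_mb ?expn_gt0 // cmb_pow2_graft //; split=> //.
by rewrite -/(cmb x) -/(cmb (2 ^ j)) cmb_pow2 addn0 addnC.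
Qed.

(* Away from near powers of two, with 2^(i+1) <= n < 2^(i+2), grafting a
   perfect tree with 2^i or 2^(i+1) leaves gives a minimal tree whose root
   is unbalanced, hence not isomorphic to [mb n]. *)
Lemma two_minimal_trees n : 1 <= n -> ~ near_pow2 n -> exists t1 t2,
  colless_minimal n t1 /\ colless_minimal n t2 /\ ~ tree_iso t1 t2.
Proof.
move=> n_pos not_near.
have [j [lo hi lt_n unbal]] : exists j, [/\ 2 ^ j <= 2 * (n - 2 ^ j),
    n - 2 ^ j <= 2 * 2 ^ j, 2 ^ j < n & 2 <= absdiff (n - 2 ^ j) (2 ^ j)].
  have far k : ~ (n = 2 ^ k \/ n = 2 ^ k + 1 \/ 1 <= n /\ n = 2 ^ k - 1).
    by move/near_pow2_of.
  have /= := trunc_log_bounds (isT : 1 < 2) n_pos.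
  case: (trunc_log 2 n) => [|i] bounds.
    by case: (far 0); move: bounds; rewrite ?expn0 ?expn1; lia.
  have far1 := far i.+1; have far2 := far i.+2; rewrite !expnS in bounds far1 far2.
  have q_pos : 0 < 2 ^ i by rewrite expn_gt0.
  have [small|big] := leqP n (3 * 2 ^ i).
    by exists i; rewrite /absdiff; split; lia.
  by exists i.+1; rewrite expnS /absdiff; split; lia.
exists (mb n), (Node (mb (n - 2 ^ j)) (mb (2 ^ j))).
split; first exact: colless_minimal_mb.
split; first by rewrite -{1}(subnK (ltnW lt_n)); apply: pow2_graft_minimal; lia.
move=> /iso_max_balanced /(_ (max_balanced_mb n)) /= [d _].
by move: d; rewrite !leaves_mb ?expn_gt0 //; lia.
Qed.

Theorem corollary7 (n : nat) (hn : 1 <= n) :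
  ((forall m, 1 <= m -> [/\ n <> 2 ^ m - 1, n <> 2 ^ m & n <> 2 ^ m + 1]) ->
     (forall tmb tg, leaves tmb = n -> max_balanced tmb -> gfb_tree n tg ->
        ~ tree_iso tmb tg) /\
     (exists t1 t2, colless_minimal n t1 /\ colless_minimal n t2 /\
        ~ tree_iso t1 t2)) /\
  ((exists m, 1 <= m /\ [\/ n = 2 ^ m - 1, n = 2 ^ m | n = 2 ^ m + 1]) ->
     exists t, colless_minimal n t /\
       forall t', colless_minimal n t' -> tree_iso t t').
Proof.
split=> [far | near].
  have not_near : ~ near_pow2 n.
    by move=> [m [m_pos hm]]; have [] := far m m_pos; case: hm.
  split; [exact: gfb_not_max_balanced | exact: two_minimal_trees].
exists (mb n); split=> [|t' /colless_minimal_iff [lt' ct']].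
  exact: colless_minimal_mb.
by rewrite -lt'; apply: near_pow2_min_iso; rewrite lt'.
Qed.
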